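(* Let $d\geq 2$ and $m\geq 1$ be integers. Let $\{e^d_k\}$ and $\{e^{d+m}_k\}$ be the standard bases of $\mathbb{C}^d$ and $\mathbb{C}^{d+m}$, and let $|J\rangle=\sum_{k=1}^d e^d_k$. Define $d\times(d+m)$ matrices $$V_i=\sum_{k=1}^{d}|e^d_k\rangle\langle e^{d+m}_{\mathrm{mod}(k+i-2,\,d+1)+1}|\quad (i=1,\dots,d+1),\qquad V_i=|J\rangle\langle e^{d+m}_i|\quad (i=d+2,\dots,d+m),$$ where $\mathrm{mod}(a,n)\in\{0,\dots,n-1\}$ is the remainder of $a$ modulo $n$, and let $\Phi:M_d\to M_{d+m}$ be $\Phi(X)=\frac{1}{d(d+m)}\sum_{i=1}^{d+m}V_i^\dagger XV_i$. Then the entanglement breaking rank of $\Phi$ equals $d+m$.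
   Context: $M_n$ denotes the complex $n\times n$ matrices. A completely positive map is entanglement breaking if its Choi matrix $\sum_{r,s}E_{rs}\otimes\Phi(E_{rs})$ is separable; equivalently, it admits a Kraus decomposition with all Kraus operators of rank one. The entanglement breaking rank of an entanglement breaking map $\Phi$ is the smallest $N$ such that $\Phi(X)=\sum_{i=1}^N R_iXR_i^\dagger$ with every $R_i$ of rank one. *)

From HB Require Import structures.
From mathcomp Require Import all_boot all_order all_algebra.
From mathcomp Require Import complex.
Set Implicit Arguments. Unset Strict Implicit. Unset Printing Implicit Defensive.
Import Order.TTheory GRing.Theory Num.Theory.
Local Open Scope ring_scope.

Definition adjmx (C : numClosedFieldType) (p q : nat) (A : 'M[C]_(p, q)) : 'M[C]_(q, p) :=
  (map_mx Num.conj A)^T.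

Definition eb_kraus_rank1 (C : numClosedFieldType) (n p : nat)
  (Phi : 'M[C]_n -> 'M[C]_p) (N : nat) : Prop :=
  exists Rk : 'I_N -> 'M[C]_(p, n),
    (forall i, \rank (Rk i) = 1%N) /\
    (forall X : 'M[C]_n, Phi X = \sum_(i < N) Rk i *m X *m adjmx (Rk i)).

Definition is_eb_rank (C : numClosedFieldType) (n p : nat)
  (Phi : 'M[C]_n -> 'M[C]_p) (N : nat) : Prop :=
  eb_kraus_rank1 Phi N /\ (forall N', eb_kraus_rank1 Phi N' -> (N <= N')%N).

(* V_i (0-indexed i : 'I_(d+m), rows k : 'I_d, columns j : 'I_(d+m)):
   for i < d+1 (paper's i = 1..d+1): entry (k,j) = 1 iff j = (k + i) mod (d+1);
   for i >= d+1 (paper's i = d+2..d+m): V_i = |J><e_i|, entry (k,j) = 1 iff j = i. *)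
Definition Vop (C : numClosedFieldType) (d m : nat) (i : 'I_(d + m)) : 'M[C]_(d, d + m) :=
  \matrix_(k < d, j < d + m)
    (if (i < d.+1)%N then ((j : nat) == ((k + i) %% d.+1)%N)%:R
     else ((j : nat) == (i : nat))%:R).

Definition Phi (C : numClosedFieldType) (d m : nat) (X : 'M[C]_d) : 'M[C]_(d + m) :=
  ((d * (d + m))%:R)^-1 *: \sum_(i < d + m) adjmx (@Vop C d m i) *m X *m @Vop C d m i.

From HB Require Import structures.
From mathcomp Require Import all_boot all_order all_algebra.
From mathcomp Require Import complex cyclic separable cyclotomic zify ring.
Set Implicit Arguments. Unset Strict Implicit. Unset Printing Implicit Defensive.
Import Order.TTheory GRing.Theory Num.Theory.
Local Open Scope ring_scope.

(* The Choi matrix of a Kraus family (K_i)_{i<N} is K^T conj(K), where the rows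
   of K are the vectorised K_i.  It is determined by the map alone and has rank
   at most N, so its rank bounds the length of every Kraus decomposition from
   below.  The operators V_i^dagger are pairwise Hilbert-Schmidt orthogonal with
   equal norms, so the Choi matrix of Phi has full rank d + m, and no Kraus
   decomposition of Phi, rank-one or not, is shorter.  Conversely, the first d + 1
   operators are the powers S^i of a cyclic shift; their discrete Fourier
   transforms are the rank-one operators |omega^(a i)>_a <omega^(k i)|_k, which
   have the same Choi matrix because the Fourier matrix is unitary.  The
   remaining operators |J><e_i| have rank one already. *)

Section Adjoint.
Variable C : numClosedFieldType.

Lemma adjmxE p q (A : 'M[C]_(p, q)) i j : adjmx A i j = (A j i)^*.
Proof. by rewrite !mxE. Qed.

Lemma adjmxZ p q (a : C) (A : 'M[C]_(p, q)) : adjmx (a *: A) = a^* *: adjmx A.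
Proof. by apply/matrixP => i j; rewrite !mxE rmorphM. Qed.

Lemma adjmxK p q (A : 'M[C]_(p, q)) : adjmx (adjmx A) = A.
Proof. by apply/matrixP => i j; rewrite !mxE conjCK. Qed.

End Adjoint.

Section KrausChoi.
Variables (C : numClosedFieldType) (p n : nat).

Definition kraus_map N (K : 'I_N -> 'M[C]_(p, n)) (X : 'M[C]_n) : 'M[C]_p :=
  \sum_(i < N) K i *m X *m adjmx (K i).

Definition krausmx N (K : 'I_N -> 'M[C]_(p, n)) : 'M[C]_(N, p * n) :=
  \matrix_i mxvec (K i).

Definition choi N (K : 'I_N -> 'M[C]_(p, n)) : 'M[C]_(p * n) :=
  (krausmx K)^T *m map_mx Num.conj (krausmx K).

Lemma sum_mxvec_index (V : nmodType) (F : 'I_(p * n) -> V) :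
  \sum_u F u = \sum_a \sum_k F (mxvec_index a k).
Proof.
rewrite pair_bigA (reindex (uncurry (@mxvec_index p n))); first by apply: eq_bigr => -[].
by have [f fK Kf] := curry_mxvec_bij p n; exists f => [x _ | u _]; [apply: fK | apply: Kf].
Qed.

Lemma choiE N (K : 'I_N -> 'M[C]_(p, n)) a k b l :
  choi K (mxvec_index a k) (mxvec_index b l) = \sum_i K i a k * (K i b l)^*.
Proof. by rewrite mxE; apply: eq_bigr => i _; rewrite !mxE !mxvecE. Qed.

Lemma kraus_mapE N (K : 'I_N -> 'M[C]_(p, n)) X a b :
  kraus_map K X a b = \sum_k \sum_l X k l * choi K (mxvec_index a k) (mxvec_index b l).
Proof.
rewrite summxE; under [LHS]eq_bigr => i _ do rewrite mxE.
under [LHS]eq_bigr => i _ do under eq_bigr => l _ do rewrite mxE big_distrl /=.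
rewrite exchange_big /=; under eq_bigr => l _ do rewrite exchange_big /=.
rewrite exchange_big /=; apply: eq_bigr => k _; apply: eq_bigr => l _.
by rewrite choiE mulr_sumr; apply: eq_bigr => i _; rewrite adjmxE mulrCA mulrA.
Qed.

Lemma kraus_map_delta N (K : 'I_N -> 'M[C]_(p, n)) a k b l :
  kraus_map K (delta_mx k l) a b = choi K (mxvec_index a k) (mxvec_index b l).
Proof.
rewrite kraus_mapE (bigD1 k) //= [X in _ + X]big1 => [|k' /negbTE nk]; last first.
  by rewrite big1 // => l' _; rewrite mxE nk mul0r.
rewrite addr0 (bigD1 l) //= [X in _ + X]big1 => [|l' /negbTE nl]; last first.
  by rewrite mxE nl andbF mul0r.
by rewrite mxE !eqxx mul1r addr0.
Qed.

Lemma eq_kraus_map_choi N N' (K : 'I_N -> 'M[C]_(p, n)) (K' : 'I_N' -> 'M[C]_(p, n)) :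
  kraus_map K =1 kraus_map K' <-> choi K = choi K'.
Proof.
split=> [eqKK' | eq_choi X]; last by apply/matrixP => a b; rewrite !kraus_mapE eq_choi.
apply/matrixP => u v; case/mxvec_indexP: u => a k; case/mxvec_indexP: v => b l.
by rewrite -!kraus_map_delta eqKK'.
Qed.

Lemma rank_choi_le N (K : 'I_N -> 'M[C]_(p, n)) : (\rank (choi K) <= N)%N.
Proof. exact: leq_trans (mxrankM_maxl _ _) (rank_leq_col _). Qed.

Lemma rank_choi_orthogonal N (K : 'I_N -> 'M[C]_(p, n)) (g : C) : g != 0 ->
  (forall i j, \sum_a \sum_k (K i a k)^* * K j a k = g * (i == j)%:R) ->
  \rank (choi K) = N.
Proof.
move=> g_neq0 orthoK; apply/eqP; rewrite eqn_leq rank_choi_le /=.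
have gramK : map_mx Num.conj (krausmx K) *m (krausmx K)^T = g%:M.
  apply/matrixP => i j; rewrite !mxE -mulr_natr -orthoK sum_mxvec_index.
  by apply: eq_bigr => a _; apply: eq_bigr => k _; rewrite !mxE !mxvecE.
have rank_gg : \rank ((g * g)%:M : 'M[C]_N) = N.
  by apply: mxrank_unit; rewrite unitmxE det_scalar unitfE expf_neq0 ?mulf_neq0.
have sandwich : map_mx Num.conj (krausmx K) *m choi K *m (krausmx K)^T = (g * g)%:M.
  by rewrite /choi !mulmxA gramK -mulmxA gramK scalar_mxM.
rewrite -{1}rank_gg -sandwich.
exact: leq_trans (mxrankM_maxl _ _) (mxrankM_maxr _ _).
Qed.
End KrausChoi.

Lemma rank_outer (F : fieldType) p q (u : 'cV[F]_p) (v : 'rV[F]_q) :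
  u != 0 -> v != 0 -> \rank (u *m v) = 1%N.
Proof.
move=> u_neq0 v_neq0; rewrite mxrankMfree; last by rewrite /row_free rank_rV v_neq0.
by rewrite -mxrank_tr rank_rV trmx_eq0 u_neq0.
Qed.

Lemma sum_indicatorM (R : pzSemiRingType) P (x y : nat) : (x < P)%N ->
  \sum_(a < P) (((a : nat) == x)%:R * ((a : nat) == y)%:R : R) = (x == y)%:R.
Proof.
move=> x_lt_P; rewrite (bigD1 (Ordinal x_lt_P)) //= big1 ?eqxx ?mul1r ?addr0 //.
by move=> a; rewrite -val_eqE /= => /negbTE->; rewrite mul0r.
Qed.

Lemma sum_shift_indicators (R : pzSemiRingType) (n k l a b : nat) :
  \sum_(i < n) ((a == (k + i) %% n)%N%:R * (b == (l + i) %% n)%N%:R : R) =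
  [&& a < n, b < n & a + l == b + k %[mod n]]%N%:R.
Proof.
have mod_lt (i : 'I_n) x : (x %% n < n)%N by rewrite ltn_pmod // (leq_ltn_trans _ (ltn_ord i)).
have [a_lt_n|a_ge_n] := ltnP a n; last first.
  by rewrite big1 // => i _; rewrite gtn_eqF ?mul0r // (leq_trans (mod_lt i _)).
have [b_lt_n|b_ge_n] := ltnP b n; last first.
  by rewrite big1 // => i _; rewrite [b == _]gtn_eqF ?mulr0 // (leq_trans (mod_lt i _)).
have n_gt0 : (0 < n)%N by apply: leq_ltn_trans a_lt_n.
have [i0 k_i0] : {i0 : 'I_n | k + i0 = a %[mod n]}%N.
  exists (Ordinal (ltn_pmod (a + (n - k %% n)) n_gt0)).
  rewrite /= modnDmr; have -> : (k + (a + (n - k %% n)) = (k %/ n).+1 * n + a)%N.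
    by have := ltn_pmod k n_gt0; have := divn_eq k n; lia.
  by rewrite modnMDl.
have shift_i0 (i : 'I_n) : (a == (k + i) %% n)%N = (i == i0).
  rewrite -(modn_small a_lt_n) -k_i0 eqn_modDl !modn_small //.
  by rewrite eq_sym -val_eqE.
rewrite (bigD1 i0) //= big1 => [|i /negbTE ne_i0]; last by rewrite shift_i0 ne_i0 mul0r.
have l_i0 : (l + i0 + k = a + l %[mod n])%N.
  by rewrite -addnA [(i0 + k)%N]addnC -modnDmr k_i0 modnDmr [(l + a)%N]addnC.
rewrite shift_i0 eqxx mul1r addr0 /= -{1}(modn_small b_lt_n) -(eqn_modDr k).
by rewrite l_i0 eq_sym.
Qed.

Lemma conjC_unity_root (C : numClosedFieldType) n (z : C) :
  (0 < n)%N -> z ^+ n = 1 -> z^* = z^-1.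
Proof.
move=> n_gt0 zn1; have norm_z : `|z| = 1.
  by apply/eqP; rewrite -(pexpr_eq1 n_gt0) // -normrX zn1 normr1.
by rewrite invC_norm norm_z expr1n invr1 mul1r.
Qed.

Lemma sum_prim_root_expr (F : fieldType) n (w : F) : n.-primitive_root w ->
  forall x y, \sum_(i < n) (w ^+ x / w ^+ y) ^+ i = (x == y %[mod n])%:R * n%:R.
Proof.
move=> prim_w x y; have n_gt0 := prim_order_gt0 prim_w.
have w_neq0 : w != 0.
  apply: contra_eq_neq (prim_expr_order prim_w) => ->.
  by rewrite expr0n gtn_eqF // eq_sym oner_neq0.
set z := w ^+ x / w ^+ y.
have z_eq1 : (z == 1) = (x == y %[mod n])%N.
  rewrite -(eq_prim_root_expr prim_w); apply/eqP/eqP => [/divr1_eq // | eq_xy].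
  by rewrite /z eq_xy divff // expf_neq0.
have [z1|z_neq1] := eqVneq z 1.
  rewrite z1 -z_eq1 z1 eqxx mul1r.
  by under eq_bigr do rewrite expr1n; rewrite sumr_const card_ord.
have zn1 : z ^+ n = 1.
  rewrite exprMn exprVn [w ^+ x ^+ n]exprAC [w ^+ y ^+ n]exprAC.
  by rewrite (prim_expr_order prim_w) !expr1n invr1 mulr1.
have := subrX1 z n; rewrite zn1 subrr => /esym/eqP.
by rewrite mulf_eq0 subr_eq0 (negbTE z_neq1) -z_eq1 (negbTE z_neq1) mul0r => /eqP.
Qed.

Lemma closed_prim_root_exists (F : closedFieldType) n :
  (0 < n)%N -> n%:R != 0 :> F -> {z : F | n.-primitive_root z}.
Proof.
move=> n_gt0 n_neq0; pose p : {poly F} := 'X^n - 1.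
have [r Dp] := closed_field_poly_normal p.
apply/sigW; rewrite (monicP _) ?monicXnsubC // scale1r in Dp.
have rn1 : all n.-unity_root r by apply/allP => z; rewrite -root_prod_XsubC -Dp.
have sz_r : (n < (size r).+1)%N by rewrite -(size_prod_XsubC r id) -Dp size_XnsubC.
have [|z] := hasP (has_prim_root n_gt0 rn1 _ sz_r); last by exists z.
by rewrite -separable_prod_XsubC -Dp separable_Xn_sub_1.
Qed.

Section KrausPhi.
Variables (C : numClosedFieldType) (d m : nat).
Hypotheses (d_gt0 : (0 < d)%N) (m_gt0 : (0 < m)%N).
Local Notation n := d.+1.

Lemma n_le_dm : (n <= d + m)%N.
Proof. by rewrite -addn1 leq_add2l. Qed.

Definition vcol (i : 'I_(d + m)) (k : 'I_d) : nat :=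
  if (i < n)%N then ((k + i) %% n)%N else i.

Lemma VopE i k a : @Vop C d m i k a = ((a : nat) == vcol i k)%:R.
Proof. by rewrite mxE /vcol; case: ifP. Qed.

Lemma vcol_lt i k : (vcol i k < d + m)%N.
Proof.
by rewrite /vcol; case: ifP => // _; apply: leq_trans (ltn_pmod _ _) n_le_dm.
Qed.

Lemma vcol_inj k : injective (vcol ^~ k).
Proof.
move=> i j; rewrite /vcol => eq_ij; apply: val_inj => /=; move: eq_ij.
case: ifP => i_lt_n; case: ifP => j_lt_n.
- by move/eqP; rewrite eqn_modDl !modn_small // => /eqP.
- by move=> eq_ij; move: j_lt_n; rewrite -eq_ij ltn_pmod.
- by move=> eq_ij; move: i_lt_n; rewrite eq_ij ltn_pmod.
- by [].
Qed.

Definition Phi_scale : C := ((d * (d + m))%:R)^-1.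

Lemma Phi_scale_gt0 : 0 < Phi_scale.
Proof. by rewrite invr_gt0 ltr0n muln_gt0 d_gt0 addn_gt0 d_gt0. Qed.

Lemma conj_sqrt_Phi_scale : (sqrtC Phi_scale)^* = sqrtC Phi_scale.
Proof. by rewrite geC0_conj // sqrtC_ge0 ltW // Phi_scale_gt0. Qed.

Lemma sqrt_Phi_scaleK : sqrtC Phi_scale * sqrtC Phi_scale = Phi_scale.
Proof. by rewrite -expr2 sqrtCK. Qed.

Definition shiftK (i : 'I_(d + m)) : 'M[C]_(d + m, d) :=
  sqrtC Phi_scale *: adjmx (@Vop C d m i).

Lemma shiftKE i a k : shiftK i a k = sqrtC Phi_scale * ((a : nat) == vcol i k)%:R.
Proof. by rewrite [LHS]mxE adjmxE VopE rmorph_nat. Qed.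

Lemma conj_shiftK i a k : (shiftK i a k)^* = shiftK i a k.
Proof. by rewrite shiftKE rmorphM /= conjC_nat conj_sqrt_Phi_scale. Qed.

Lemma Phi_shiftK : @Phi C d m =1 kraus_map shiftK.
Proof.
move=> X; rewrite /Phi scaler_sumr; apply: eq_bigr => i _.
rewrite /shiftK adjmxZ adjmxK conj_sqrt_Phi_scale -!scalemxAl -scalemxAr.
by rewrite scalerA sqrt_Phi_scaleK.
Qed.

Lemma shiftK_orthogonal i j :
  \sum_a \sum_k (shiftK i a k)^* * shiftK j a k = Phi_scale * d%:R * (i == j)%:R.
Proof.
rewrite exchange_big /= (eq_bigr (fun=> Phi_scale * (i == j)%:R)) => [|k _].
  by rewrite sumr_const card_ord [RHS]mulrAC [RHS]mulr_natr.
under eq_bigr => a _ do rewrite conj_shiftK !shiftKE mulrACA sqrt_Phi_scaleK.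
by rewrite -mulr_sumr sum_indicatorM ?vcol_lt // (inj_eq (@vcol_inj k)).
Qed.

Lemma kraus_Phi_size_ge N (K : 'I_N -> 'M[C]_(d + m, d)) :
  @Phi C d m =1 kraus_map K -> (d + m <= N)%N.
Proof.
move=> PhiK; have d_neq0 : Phi_scale * d%:R != 0.
  by rewrite mulf_neq0 ?pnatr_eq0 -?lt0n // gt_eqF // Phi_scale_gt0.
rewrite -(rank_choi_orthogonal d_neq0 shiftK_orthogonal).
have /eq_kraus_map_choi -> : kraus_map shiftK =1 kraus_map K.
  by move=> X; rewrite -Phi_shiftK PhiK.
exact: rank_choi_le.
Qed.

Lemma choi_shiftK_cyclic a k b l :
  \sum_(i < d + m | (i < n)%N) shiftK i a k * (shiftK i b l)^* =
  Phi_scale * [&& a < n, b < n & a + l == b + k %[mod n]]%N%:R.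
Proof.
pose F i := Phi_scale * (((a : nat) == (k + i) %% n)%N%:R * ((b : nat) == (l + i) %% n)%N%:R).
rewrite (eq_bigr (fun i : 'I_(d + m) => F i)) => [|i i_lt_n].
  by rewrite -(big_ord_widen _ F n_le_dm) -mulr_sumr sum_shift_indicators.
by rewrite conj_shiftK !shiftKE /vcol i_lt_n mulrACA sqrt_Phi_scaleK.
Qed.

Variable w : C.
Hypothesis w_prim : n.-primitive_root w.

Lemma conj_w_expr t : (w ^+ t)^* = (w ^+ t)^-1.
Proof.
apply: (conjC_unity_root (ltn0Sn d)).
by rewrite exprAC (prim_expr_order w_prim) expr1n.
Qed.

Definition fourier_col (i : 'I_(d + m)) : 'cV[C]_(d + m) :=
  \col_a (if (i < n)%N then sqrtC (Phi_scale / n%:R) * (a < n)%N%:R * w ^+ (a * i)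
          else sqrtC Phi_scale * ((a : nat) == i)%:R).

Definition fourier_row (i : 'I_(d + m)) : 'rV[C]_d :=
  \row_k (if (i < n)%N then (w ^+ (k * i))^-1 else 1).

Definition fourierK i := fourier_col i *m fourier_row i.

Lemma fourierKE i a k : fourierK i a k = fourier_col i a 0 * fourier_row i 0 k.
Proof. by rewrite mxE big_ord1. Qed.

Lemma rank_fourierK i : \rank (fourierK i) = 1%N.
Proof.
have sqrt_neq0 (x : C) : 0 < x -> sqrtC x != 0 by move=> x_gt0; rewrite gt_eqF ?sqrtC_gt0.
apply: rank_outer; apply/matrix0Pn.
  have [i_lt_n | i_ge_n] := ltnP i n.
    exists (Ordinal (leq_trans (ltn0Sn d) n_le_dm)), 0; rewrite mxE i_lt_n /=.
    by rewrite mul0n expr0 !mulr1 sqrt_neq0 // divr_gt0 ?Phi_scale_gt0 ?ltr0n.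
  exists i, 0; rewrite mxE ltnNge i_ge_n /= eqxx mulr1.
  by rewrite sqrt_neq0 ?Phi_scale_gt0.
exists 0, (Ordinal d_gt0); rewrite mxE.
by case: ifP => _; rewrite ?mul0n ?expr0 ?invr1 oner_neq0.
Qed.

Lemma fourierK_tail (i : 'I_(d + m)) : (n <= i)%N -> fourierK i = shiftK i.
Proof.
move=> i_ge_n; apply/matrixP => a k.
by rewrite fourierKE shiftKE !mxE /vcol ltnNge i_ge_n /= mulr1.
Qed.

Lemma choi_fourierK_cyclic a k b l :
  \sum_(i < d + m | (i < n)%N) fourierK i a k * (fourierK i b l)^* =
  Phi_scale * [&& a < n, b < n & a + l == b + k %[mod n]]%N%:R.
Proof.
have n_neq0 : n%:R != 0 :> C by rewrite pnatr_eq0.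
pose F i := Phi_scale / n%:R * ((a < n) && (b < n))%N%:R * (w ^+ (a + l) / w ^+ (b + k)) ^+ i.
rewrite (eq_bigr (fun i : 'I_(d + m) => F i)) => [|i i_lt_n].
  rewrite -(big_ord_widen _ F n_le_dm) -mulr_sumr sum_prim_root_expr //.
  case: (a < n)%N; case: (b < n)%N; case: (_ == _ %[mod n]);
    by rewrite /= ?(mulr0, mul0r, mulr1, mul1r, divfK n_neq0).
have s_ge0 : 0 <= sqrtC (Phi_scale / n%:R).
  by rewrite sqrtC_ge0 divr_ge0 ?ler0n ?ltW ?Phi_scale_gt0.
rewrite !fourierKE !mxE i_lt_n /= !rmorphM /= conjC_nat fmorphV /= !conj_w_expr invrK.
rewrite geC0_conj // /F -mulnb natrM exprMn exprVn -!exprM !mulnDl !exprD invfM.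
set s := sqrtC _; have <- : s * s = Phi_scale / n%:R by rewrite -expr2 sqrtCK.
move: (w ^+ (a * i)) (w ^+ (l * i)) (w ^+ (b * i))^-1 (w ^+ (k * i))^-1 => wa wl wb wk.
ring.
Qed.

Lemma choi_fourierK : choi fourierK = choi shiftK.
Proof.
apply/matrixP => u v; case/mxvec_indexP: u => a k; case/mxvec_indexP: v => b l.
rewrite !choiE (bigID (fun i : 'I_(d + m) => (i < n)%N)) /=.
rewrite [RHS](bigID (fun i : 'I_(d + m) => (i < n)%N)) /=.
rewrite choi_fourierK_cyclic choi_shiftK_cyclic; congr (_ + _).
by apply: eq_bigr => i; rewrite -leqNgt => /fourierK_tail ->.
Qed.

Lemma Phi_fourierK : @Phi C d m =1 kraus_map fourierK.
Proof.
move=> X; rewrite Phi_shiftK; move: X; apply/eq_kraus_map_choi.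
by rewrite choi_fourierK.
Qed.

End KrausPhi.

Local Open Scope complex_scope.

Theorem mainTheorem4 (R : rcfType) (d m : nat) :
  (2 <= d)%N -> (1 <= m)%N ->
  is_eb_rank (@Phi R[i] d m) (d + m)%N.
Proof.
move=> d_ge2 m_gt0; have d_gt0 : (0 < d)%N by apply: ltnW.
have n_neq0 : d.+1%:R != 0 :> R[i] by rewrite pnatr_eq0.
have [w w_prim] := closed_prim_root_exists (ltn0Sn d) n_neq0.
split.
  exists (fourierK w); split; first exact: rank_fourierK.
  exact: Phi_fourierK.
by move=> N [K [_ PhiK]]; exact: kraus_Phi_size_ge PhiK.
Qed.
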